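(* Let $|q|<1$ and $|qa|<|z|$, with parameters such that no denominator vanishes. Then $$f(a,k,z,q)=\sum_{n=1}^{\infty}\frac{k q^n}{1-kq^n}+\sum_{n=1}^{\infty}\frac{q^n a/z}{1-q^n a/z}-\sum_{n=1}^{\infty}\frac{a q^n}{1-aq^n}-\sum_{n=1}^{\infty}\frac{q^n k/z}{1-q^n k/z}.$$
   Context: Notation: $(x;q)_n=(1-x)(1-xq)\cdots(1-xq^{n-1})$, $(x_1,\dots,x_m;q)_n=(x_1;q)_n\cdots(x_m;q)_n$. Define $$f(a,k,z,q):=\sum_{n=1}^{\infty}\frac{(q\sqrt{k},-q\sqrt{k},k,z,k/a;q)_{n}}{(\sqrt{k},-\sqrt{k},qk,qk/z,qa;q)_{n}(1-q^n)}\left(\frac{qa}{z}\right)^{n}.$$ *)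

From Stdlib Require Import Reals.
Open Scope R_scope.

Record Cplx : Type := mkC { Re : R; Im : R }.

Definition Czero : Cplx := mkC 0 0.
Definition Cone : Cplx := mkC 1 0.
Definition Cadd (x y : Cplx) : Cplx := mkC (Re x + Re y) (Im x + Im y).
Definition Copp (x : Cplx) : Cplx := mkC (- Re x) (- Im x).
Definition Csub (x y : Cplx) : Cplx := Cadd x (Copp y).
Definition Cmul (x y : Cplx) : Cplx :=
  mkC (Re x * Re y - Im x * Im y) (Re x * Im y + Im x * Re y).
Definition Cinv (x : Cplx) : Cplx :=
  let d := Re x * Re x + Im x * Im x in mkC (Re x / d) (- Im x / d).
Definition Cdiv (x y : Cplx) : Cplx := Cmul x (Cinv y).
Fixpoint Cpow (x : Cplx) (n : nat) : Cplx :=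
  match n with O => Cone | S m => Cmul x (Cpow x m) end.
Definition Cnorm (x : Cplx) : R := sqrt (Re x * Re x + Im x * Im x).

Definition Cseq_cv (u : nat -> Cplx) (l : Cplx) : Prop :=
  forall eps : R, eps > 0 -> exists N : nat, forall n : nat, (n >= N)%nat ->
    Cnorm (Csub (u n) l) < eps.

(* partial sums  F 1 + ... + F N  (empty for N = 0) *)
Fixpoint Cpartial (F : nat -> Cplx) (N : nat) : Cplx :=
  match N with O => Czero | S M => Cadd (Cpartial F M) (F (S M)) end.

Definition Csum1 (F : nat -> Cplx) (L : Cplx) : Prop := Cseq_cv (Cpartial F) L.

Fixpoint Cpoch (x q : Cplx) (n : nat) : Cplx :=
  match n with
  | O => Cone
  | S m => Cmul (Cpoch x q m) (Csub Cone (Cmul x (Cpow q m)))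
  end.

(* n-th term of the series f(a,k,z,q); s plays the role of sqrt k (s*s = k) *)
Definition f_term (a k z q s : Cplx) (n : nat) : Cplx :=
  Cmul
    (Cdiv
      (Cmul (Cmul (Cmul (Cmul (Cpoch (Cmul q s) q n) (Cpoch (Copp (Cmul q s)) q n))
             (Cpoch k q n)) (Cpoch z q n)) (Cpoch (Cdiv k a) q n))
      (Cmul (Cmul (Cmul (Cmul (Cmul (Cpoch s q n) (Cpoch (Copp s) q n))
             (Cpoch (Cmul q k) q n)) (Cpoch (Cdiv (Cmul q k) z) q n))
             (Cpoch (Cmul q a) q n))
            (Csub Cone (Cpow q n))))
    (Cpow (Cdiv (Cmul q a) z) n).

Definition lam_term (x q : Cplx) (n : nat) : Cplx :=
  Cdiv (Cmul x (Cpow q n)) (Csub Cone (Cmul x (Cpow q n))).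

(* Let T_j(n) be the n-th term of f with (a, k) replaced by (a q^j, k q^j).
   The very-well-poised factors collapse, so T_j(n) is an explicit rational factor
   times a product G_j(n) of n simple ratios.  A rational identity gives the
   telescoping relation  T_j(n) - T_(j+1)(n) = V_j(n) - V_j(n+1),  where V_j(1) is the
   sum of the four Lambert terms at index j+1.  Summing over 1 <= n <= N and j < N,
     sum_(n<=N) T_0(n) - sum_(j<N) Lambert(j+1) = sum_(n<=N) T_N(n) - sum_(j<N) V_j(N+1),
   and uniform geometric bounds |T_N(n)| <= c |q|^N, |V_j(N+1)| <= c r^N (r < 1) show
   that the right-hand side is O(N rho^N), hence tends to 0. *)

From Stdlib Require Import Reals Lra Lia.
From Coquelicot Require Import Coquelicot.

Open Scope C_scope.

Lemma pow_le_mono (x : R) (m n : nat) :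
  (0 <= x <= 1)%R -> (m <= n)%nat -> (x ^ n <= x ^ m)%R.
Proof.
  intros Hx Hmn. replace n with (m + (n - m))%nat by lia. rewrite pow_add.
  assert (0 <= x ^ m)%R by (apply pow_le; lra).
  assert (x ^ (n - m) <= 1)%R by (rewrite <- (pow1 (n - m)); apply pow_incr; lra).
  assert (0 <= x ^ (n - m))%R by (apply pow_le; lra). nra.
Qed.

Lemma pow_le_1 (x : R) (n : nat) : (0 <= x <= 1)%R -> (x ^ n <= 1)%R.
Proof. intros Hx. rewrite <- (pow1 n). apply pow_incr. lra. Qed.

Lemma frac_le (x x' d d' : R) : (0 <= x <= x')%R -> (0 < d' <= d)%R -> (x / d <= x' / d')%R.
Proof.
  intros Hx Hd. unfold Rdiv. apply Rmult_le_compat; try lra.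
  - left; apply Rinv_0_lt_compat; lra.
  - apply Rinv_le_contravar; lra.
Qed.

Lemma pow_small (x e : R) : (0 <= x < 1)%R -> (0 < e)%R ->
  exists N, forall n, (N <= n)%nat -> (x ^ n <= e)%R.
Proof.
  intros Hx He.
  destruct (pow_lt_1_zero x ltac:(rewrite Rabs_pos_eq; lra) e He) as (N & HN).
  exists N. intros n Hn. specialize (HN n Hn).
  rewrite Rabs_pos_eq in HN by (apply pow_le; lra). lra.
Qed.

(* n r^n -> 0 for 0 <= r < 1: compare with s^n, s = (1+r)/2, using Bernoulli's
   inequality (1 + a)^n >= n a for 1/s = 1 + a. *)
Lemma n_geom (r : R) : (0 <= r < 1)%R -> is_lim_seq (fun n => INR n * r ^ n)%R 0%R.
Proof.
  intros Hr. set (s := ((1 + r) / 2)%R).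
  assert (Hs : (/2 <= s < 1)%R) by (unfold s; lra).
  set (a := (/ s - 1)%R).
  assert (Ha : (0 < a)%R).
  { unfold a. assert (1 < / s)%R. { rewrite <- Rinv_1. apply Rinv_lt_contravar; lra. } lra. }
  apply is_lim_seq_le_le with (u := fun _ => 0%R) (w := fun n => (/ a * s ^ n)%R).
  - intros n. assert (Hsn : (0 < s ^ n)%R) by (apply pow_lt; lra).
    assert (Hn : (0 <= INR n)%R) by apply pos_INR.
    split; [apply Rmult_le_pos; [lra| apply pow_le; lra]|].
    assert (Bern := Rle_pow_lin a n ltac:(lra)).
    replace (1 + a)%R with (/ s)%R in Bern by (unfold a; ring).
    rewrite pow_inv in Bern.
    assert (Hrs : (r ^ n <= s ^ n * s ^ n)%R).
    { rewrite <- Rpow_mult_distr. apply pow_incr. split; [lra|]. unfold s. nra. }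
    assert (Hns : (INR n * s ^ n <= / a)%R).
    { apply (Rmult_le_reg_r (a * / s ^ n)). { apply Rmult_lt_0_compat; [lra|].
        apply Rinv_0_lt_compat; lra. }
      replace (INR n * s ^ n * (a * / s ^ n))%R with (INR n * a)%R by (field; lra).
      replace (/ a * (a * / s ^ n))%R with (/ s ^ n)%R by (field; lra). lra. }
    apply Rle_trans with ((INR n * s ^ n) * s ^ n)%R.
    + replace (INR n * s ^ n * s ^ n)%R with (INR n * (s ^ n * s ^ n))%R by ring.
      apply Rmult_le_compat_l; lra.
    + apply Rmult_le_compat_r; lra.
  - apply is_lim_seq_const.
  - assert (H := is_lim_seq_scal_l (fun n => s ^ n)%R (/ a)%R 0%R
       (is_lim_seq_geom s ltac:(rewrite Rabs_pos_eq; lra))).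
    simpl in H. rewrite Rmult_0_r in H. exact H.
Qed.

Lemma Cmod_1m_ge (w : C) : (1 - Cmod w <= Cmod (1 - w))%R.
Proof.
  assert (H := Cmod_triangle (1 - w) w).
  replace (1 - w + w) with (RtoC 1) in H by ring. rewrite Cmod_1 in H. lra.
Qed.

Lemma Cmod_minus_le (x w : C) : (Cmod (x - w) <= Cmod x + Cmod w)%R.
Proof.
  unfold Cminus. eapply Rle_trans; [apply Cmod_triangle|]. rewrite Cmod_opp. lra.
Qed.

Lemma Cmod_1m_le (w : C) : (Cmod (1 - w) <= 1 + Cmod w)%R.
Proof. eapply Rle_trans; [apply Cmod_minus_le|]. rewrite Cmod_1. lra. Qed.

Lemma Cmod_pow_le_1 (q : C) (n : nat) : (Cmod q <= 1)%R -> (Cmod (q ^ n) <= 1)%R.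
Proof.
  intros Hq. rewrite Cmod_pow. apply pow_le_1. split; [apply Cmod_ge_0|lra].
Qed.

Lemma Cmod_1m_mul_le (c w : C) : (Cmod w <= 1)%R -> (Cmod (1 - c * w) <= 1 + Cmod c)%R.
Proof.
  intros Hw. eapply Rle_trans; [apply Cmod_1m_le|]. rewrite Cmod_mult.
  assert (0 <= Cmod c)%R by apply Cmod_ge_0. nra.
Qed.

Lemma Cmod_1m_pow_ge (q : C) (n : nat) :
  (Cmod q <= 1)%R -> (1 <= n)%nat -> (1 - Cmod q <= Cmod (1 - q ^ n))%R.
Proof.
  intros Hq Hn. eapply Rle_trans; [|apply Cmod_1m_ge]. rewrite Cmod_pow.
  assert (Cmod q ^ n <= Cmod q ^ 1)%R by (apply pow_le_mono; [split; [apply Cmod_ge_0|lra]|lia]).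
  simpl in H. lra.
Qed.

Lemma Cmod_frac_bound (x y1 y2 : C) (X d : R) : (0 < d)%R ->
  (Cmod x <= X)%R -> (d <= Cmod y1)%R -> (d <= Cmod y2)%R ->
  (Cmod (x / (y1 * y2)) <= X / (d * d))%R.
Proof.
  intros Hd Hx H1 H2.
  assert (n1 : y1 <> 0) by (intro E; rewrite E, Cmod_0 in H1; lra).
  assert (n2 : y2 <> 0) by (intro E; rewrite E, Cmod_0 in H2; lra).
  rewrite Cmod_div, Cmod_mult by (apply Cmult_neq_0; auto).
  apply frac_le; [split; [apply Cmod_ge_0| auto]|]. split; [nra|].
  apply Rmult_le_compat; lra.
Qed.

Lemma Cmod_1m_near_one (c w : C) (t : R) : (Cmod c * Cmod w <= t)%R ->
  (Cmod (1 - c * w) <= 1 + t)%R /\ (1 - t <= Cmod (1 - c * w))%R.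
Proof.
  intros H. split.
  - eapply Rle_trans; [apply Cmod_1m_le|]. rewrite Cmod_mult. lra.
  - eapply Rle_trans; [|apply Cmod_1m_ge]. rewrite Cmod_mult. lra.
Qed.

Definition cv (u : nat -> C) (l : C) : Prop := forall eps : R, (eps > 0)%R ->
  exists N : nat, forall n : nat, (n >= N)%nat -> (Cmod (u n - l) < eps)%R.

Fixpoint csum (f : nat -> C) (N : nat) : C :=
  match N with O => 0 | S M => csum f M + f M end.

Lemma csum_bound (f : nat -> C) (M : R) (N : nat) :
  (forall j, (j < N)%nat -> Cmod (f j) <= M)%R -> (Cmod (csum f N) <= INR N * M)%R.
Proof.
  induction N as [|N IH]; intros H; simpl csum.
  - rewrite Cmod_0. simpl. lra.
  - eapply Rle_trans; [apply Cmod_triangle|]. rewrite S_INR.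
    assert (H1 := IH ltac:(intros; apply H; lia)). assert (H2 := H N ltac:(lia)). lra.
Qed.

Fixpoint cprod (x : nat -> C) (m : nat) : C :=
  match m with O => 1 | S m' => cprod x m' * x m' end.

Lemma cprod_bound (x : nat -> C) (c B r : R) (I0 : nat) : (0 <= c)%R -> (0 < r <= B)%R ->
  (forall i, Cmod (x i) <= c * B)%R -> (forall i, (I0 <= i)%nat -> Cmod (x i) <= c * r)%R ->
  forall m, (Cmod (cprod x m) <= c ^ m * (B / r) ^ I0 * r ^ m)%R.
Proof.
  intros Hc Hr Hall Hev m.
  assert (HBr : (1 <= B / r)%R).
  { apply (Rmult_le_reg_r r); [lra|]. unfold Rdiv. rewrite Rmult_assoc, Rinv_l by lra. lra. }
  enough (Hmin : (Cmod (cprod x m) <= c ^ m * (B / r) ^ (min m I0) * r ^ m)%R).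
  { eapply Rle_trans; [exact Hmin|].
    apply Rmult_le_compat_r; [apply pow_le; lra|].
    apply Rmult_le_compat_l; [apply pow_le; auto|]. apply Rle_pow; [auto| lia]. }
  induction m as [|m IH]; simpl cprod.
  - rewrite Cmod_1. simpl. lra.
  - rewrite Cmod_mult.
    assert (0 <= (B / r) ^ min m I0)%R by (apply pow_le; lra).
    assert (0 <= c ^ m)%R by (apply pow_le; auto).
    assert (0 <= r ^ m)%R by (apply pow_le; lra).
    assert (0 <= c ^ m * (B / r) ^ min m I0 * r ^ m)%R by (repeat apply Rmult_le_pos; auto).
    destruct (Compare_dec.le_lt_dec I0 m) as [Hle|Hlt].
    + replace (min (S m) I0) with (min m I0) by lia.
      apply Rle_trans with ((c ^ m * (B / r) ^ min m I0 * r ^ m) * (c * r))%R.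
      * apply Rmult_le_compat; auto; apply Cmod_ge_0.
      * simpl. lra.
    + replace (min (S m) I0) with (S (min m I0)) by lia.
      apply Rle_trans with ((c ^ m * (B / r) ^ min m I0 * r ^ m) * (c * B))%R.
      * apply Rmult_le_compat; auto; apply Cmod_ge_0.
      * simpl. replace B with (B / r * r)%R at 2 by (field; lra). lra.
Qed.

Lemma Cmod_le_parts (x : C) : (Cmod x <= 2 * (Rabs (fst x) + Rabs (snd x)))%R.
Proof.
  eapply Rle_trans; [apply Cmod_2Rmax|].
  assert (sqrt 2 <= 2)%R.
  { rewrite <- (sqrt_square 2) at 2 by lra. apply sqrt_le_1_alt. lra. }
  assert (0 <= Rmax (Rabs (fst x)) (Rabs (snd x)))%R.
  { eapply Rle_trans; [apply Rabs_pos| apply Rmax_l]. }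
  assert (Rmax (Rabs (fst x)) (Rabs (snd x)) <= Rabs (fst x) + Rabs (snd x))%R.
  { apply Rmax_lub; generalize (Rabs_pos (fst x)) (Rabs_pos (snd x)); lra. }
  assert (0 <= sqrt 2)%R by apply sqrt_pos.
  nra.
Qed.

Lemma csum_fst (f : nat -> C) (N : nat) : fst (csum f (S N)) = sum_f_R0 (fun i => fst (f i)) N.
Proof. induction N as [|N IH]; simpl; [ring|]. simpl in IH. rewrite <- IH. reflexivity. Qed.

Lemma csum_snd (f : nat -> C) (N : nat) : snd (csum f (S N)) = sum_f_R0 (fun i => snd (f i)) N.
Proof. induction N as [|N IH]; simpl; [ring|]. simpl in IH. rewrite <- IH. reflexivity. Qed.

Lemma real_geom_dominated_cv (f : nat -> R) (M r : R) : (0 <= r < 1)%R ->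
  (forall n, Rabs (f n) <= M * r ^ n)%R -> {l | Un_cv (sum_f_R0 f) l}.
Proof.
  intros Hr Hf. apply ex_series_Reals_0.
  apply (ex_series_le f (fun n => M * r ^ n)%R); [exact Hf|].
  apply (ex_series_ext (fun n => scal M (r ^ n))%R); [reflexivity|].
  apply (@ex_series_scal_l R_AbsRing R_NormedModule M (fun n => r ^ n)%R).
  apply ex_series_geom. rewrite Rabs_pos_eq; lra.
Qed.

Lemma geom_dominated_cv (f : nat -> C) (M r : R) : (0 <= r < 1)%R ->
  (forall n, Cmod (f n) <= M * r ^ n)%R -> exists L, cv (csum f) L.
Proof.
  intros Hr Hf.
  destruct (real_geom_dominated_cv (fun i => fst (f i)) M r Hr) as (l1 & H1).
  { intros n. eapply Rle_trans; [|apply Hf].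
    eapply Rle_trans; [|apply Rmax_Cmod]. apply Rmax_l. }
  destruct (real_geom_dominated_cv (fun i => snd (f i)) M r Hr) as (l2 & H2).
  { intros n. eapply Rle_trans; [|apply Hf].
    eapply Rle_trans; [|apply Rmax_Cmod]. apply Rmax_r. }
  exists (l1, l2). intros eps He.
  destruct (H1 (eps/5)%R ltac:(lra)) as (N1 & HN1).
  destruct (H2 (eps/5)%R ltac:(lra)) as (N2 & HN2).
  exists (S (max N1 N2)). intros n Hn. destruct n as [|m]; [lia|].
  eapply Rle_lt_trans; [apply Cmod_le_parts|].
  specialize (HN1 m ltac:(lia)). specialize (HN2 m ltac:(lia)).
  unfold R_dist in HN1, HN2. rewrite <- csum_fst in HN1. rewrite <- csum_snd in HN2.
  destruct (csum f (S m)) as [x y]. simpl in *.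
  replace (x + - l1)%R with (x - l1)%R by ring. replace (y + - l2)%R with (y - l2)%R by ring.
  lra.
Qed.

Lemma cv_plus (u v : nat -> C) (l m : C) :
  cv u l -> cv v m -> cv (fun n => u n + v n) (l + m).
Proof.
  intros Hu Hv eps He.
  destruct (Hu (eps/2)%R ltac:(lra)) as (N1 & H1).
  destruct (Hv (eps/2)%R ltac:(lra)) as (N2 & H2).
  exists (max N1 N2). intros n Hn.
  replace (u n + v n - (l + m)) with ((u n - l) + (v n - m)) by ring.
  eapply Rle_lt_trans; [apply Cmod_triangle|].
  specialize (H1 n ltac:(lia)). specialize (H2 n ltac:(lia)). lra.
Qed.

Lemma cv_opp (u : nat -> C) (l : C) : cv u l -> cv (fun n => - u n) (- l).
Proof.
  intros Hu eps He. destruct (Hu eps He) as (N & HN). exists N. intros n Hn.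
  replace (- u n - - l) with (- (u n - l)) by ring. rewrite Cmod_opp. auto.
Qed.

Lemma cv_err (u w : nat -> C) (e : nat -> R) (l : C) :
  cv w l -> (forall n, Cmod (u n - w n) <= e n)%R -> is_lim_seq e 0%R -> cv u l.
Proof.
  intros Hw He Hl eps Heps. apply is_lim_seq_Reals in Hl.
  destruct (Hw (eps/2)%R ltac:(lra)) as (N1 & H1).
  destruct (Hl (eps/2)%R ltac:(lra)) as (N2 & H2).
  exists (max N1 N2). intros n Hn.
  replace (u n - l) with ((u n - w n) + (w n - l)) by ring.
  eapply Rle_lt_trans; [apply Cmod_triangle|].
  specialize (H1 n ltac:(lia)). specialize (H2 n ltac:(lia)).
  unfold R_dist in H2. rewrite Rminus_0_r in H2.
  specialize (He n). generalize (Rle_abs (e n)). lra.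
Qed.

Lemma eventually_bounded_below (g : nat -> C) (P : nat) (e : R) : (0 < e)%R ->
  (forall p, g p <> 0) -> (forall p, (P <= p)%nat -> (e <= Cmod (g p))%R) ->
  exists d, (0 < d)%R /\ forall p, (d <= Cmod (g p))%R.
Proof.
  intros He Hnz. revert e He. induction P as [|P IH]; intros e He Hev.
  - exists e. split; [lra|]. intros p. apply Hev. lia.
  - apply (IH (Rmin e (Cmod (g P)))).
    + apply Rmin_pos; [lra| apply Cmod_gt_0; auto].
    + intros p Hp. destruct (Nat.eq_dec p P) as [->|Hne]; [apply Rmin_r|].
      eapply Rle_trans; [apply Rmin_l| apply Hev; lia].
Qed.

Lemma factor_bounded_below (c q : C) : (Cmod q < 1)%R ->
  (forall p, 1 - c * q ^ (S p) <> 0) ->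
  exists d, (0 < d)%R /\ forall p, (d <= Cmod (1 - c * q ^ (S p)))%R.
Proof.
  intros Hq Hnz. assert (Hc := Cmod_ge_0 c). assert (Hq0 := Cmod_ge_0 q).
  destruct (pow_small (Cmod q) (/ (2 * (Cmod c + 1))) ltac:(lra)) as (N & HN).
  { apply Rinv_0_lt_compat; lra. }
  apply (eventually_bounded_below (fun p => 1 - c * q ^ (S p)) N (/2) ltac:(lra) Hnz).
  intros p Hp. eapply Rle_trans; [|apply Cmod_1m_ge].
  rewrite Cmod_mult, Cmod_pow.
  assert (H1 := HN (S p) ltac:(lia)).
  assert (Cmod c * Cmod q ^ S p <= Cmod c * / (2 * (Cmod c + 1)))%R
    by (apply Rmult_le_compat_l; auto).
  assert (Cmod c * / (2 * (Cmod c + 1)) <= /2)%R.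
  { apply (Rmult_le_reg_r (2 * (Cmod c + 1))); [lra|].
    rewrite Rmult_assoc, Rinv_l by lra. nra. }
  lra.
Qed.

Definition lam (x q : C) (n : nat) : C := x * q ^ n / (1 - x * q ^ n).

Lemma lam_cv (x q : C) (d : R) : (Cmod q < 1)%R -> (0 < d)%R ->
  (forall p, d <= Cmod (1 - x * q ^ (S p)))%R ->
  exists L, cv (csum (fun i => lam x q (S i))) L.
Proof.
  intros Hq Hd H. assert (Hq0 := Cmod_ge_0 q).
  apply (geom_dominated_cv _ (Cmod x * Cmod q / d)%R (Cmod q)); [lra|].
  intros n. unfold lam.
  assert (Hnz : 1 - x * q ^ (S n) <> 0).
  { intro E. specialize (H n). rewrite E, Cmod_0 in H. lra. }
  rewrite Cmod_div, Cmod_mult, Cmod_pow by auto. simpl pow.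
  replace (Cmod x * Cmod q / d * Cmod q ^ n)%R with (Cmod x * (Cmod q * Cmod q ^ n) / d)%R
    by (field; lra).
  apply frac_le; auto. split; [|lra].
  apply Rmult_le_pos; [apply Cmod_ge_0|]. apply Rmult_le_pos; auto. apply pow_le; auto.
Qed.
Record admissible (a k z q : C) : Prop := {
  adm_a : a <> 0;
  adm_z : z <> 0;
  adm_k : forall p, 1 - k * q ^ (S p) <> 0;
  adm_kz : forall p, 1 - k / z * q ^ (S p) <> 0;
  adm_aq : forall p, 1 - a * q ^ (S p) <> 0;
  adm_az : forall p, 1 - a / z * q ^ (S p) <> 0;
  adm_q : forall p, 1 - q ^ (S p) <> 0 }.

(* The side conditions left by [field] are admissibility conditions multiplied by
   a nonzero scalar c (c = z after clearing the denominators of k/z and a/z, c = 1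
   when [field] merely renormalized the expression): [nz_scaled c] derives such a
   condition from the matching hypothesis in context. *)
Ltac nz_scaled c :=
  let E := fresh in intro E;
  match type of E with ?A = _ =>
    match goal with
    | h : ?B <> _ |- _ => apply h; replace B with (A / c) by (field; auto); rewrite E; field; auto
    end
  end.

(* Rewrite q^(m + n) and q^(S n) into products, so that [field] sees q, q^j, q^n. *)
Ltac expand_pow := repeat (rewrite ?Cpow_S, ?Cpow_add_r).

Section ShiftedTerms.
Variables a k z q : C.
Hypothesis Hadm : admissible a k z q.

(* T j n is the n-th term of f with (a, k) replaced by (a q^j, k q^j), after the
   well-poised cancellation:
     T j n = (1 - k q^(j+2n)) / ((1 - k q^(j+n)) (1 - q^n)) * G j n,
     G j n = (z, k/a; q)_n / (k q^(j+1)/z, a q^(j+1); q)_n * (a q^(j+1)/z)^n,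
   the latter written as the product of the ratios of consecutive factors. *)
Definition ratio (j i : nat) : C :=
  (1 - z * q ^ i) * (1 - k / a * q ^ i) * (a / z * q ^ (S j))
  / ((1 - k / z * q ^ (S (j + i))) * (1 - a * q ^ (S (j + i)))).

Definition G (j n : nat) : C := cprod (ratio j) n.

Definition T (j n : nat) : C :=
  (1 - k * q ^ (j + n + n)) / ((1 - k * q ^ (j + n)) * (1 - q ^ n)) * G j n.

Definition V (j n : nat) : C :=
  G j n * ((1 - k * (a / z) * q ^ (S (j + j + n)))
           / ((1 - a / z * q ^ (S j)) * (1 - k * q ^ (j + n)))).

Definition lambert4 (n : nat) : C :=
  lam k q n + lam (a / z) q n - lam a q n - lam (k / z) q n.

Lemma G_shift (j n : nat) :
  G (S j) n = G j n * q ^ n * ((1 - k / z * q ^ (S j)) * (1 - a * q ^ (S j)))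
     / ((1 - k / z * q ^ (S (j + n))) * (1 - a * q ^ (S (j + n)))).
Proof.
  destruct Hadm as [ha hz _ hkz hA _ _]. revert n.
  unfold G; intros n; induction n as [|n IH]; simpl cprod.
  - rewrite Nat.add_0_r. assert (h5 := hkz j). assert (h6 := hA j).
    field. repeat split; auto; nz_scaled z.
  - rewrite IH. unfold ratio.
    assert (h1 := hkz (j + n)%nat). assert (h2 := hA (j + n)%nat).
    assert (h3 := hkz (S j + n)%nat). assert (h4 := hA (S j + n)%nat).
    assert (h5 := hkz j). assert (h6 := hA j).
    replace (j + S n)%nat with (S j + n)%nat by lia.
    revert h1 h2 h3 h4 h5 h6. expand_pow. set (J := q ^ j). set (X := q ^ n). intros.
    field. repeat split; auto; nz_scaled z.
Qed.

Lemma T_tele (j n : nat) : (1 <= n)%nat ->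
  T j n - T (S j) n = V j n - V j (S n).
Proof.
  intros Hn. destruct Hadm as [ha hz hk hkz hA haz hq].
  unfold T, V. rewrite G_shift. unfold G. simpl cprod. unfold ratio.
  assert (h1 : 1 - q ^ n <> 0) by (destruct n; [lia| apply hq]).
  assert (h2 : 1 - k * q ^ (j + n) <> 0)
    by (destruct n; [lia| rewrite Nat.add_succ_r; apply hk]).
  assert (h3 := hk (j + n)%nat). assert (h4 := haz j).
  assert (h5 := hkz (j + n)%nat). assert (h6 := hA (j + n)%nat).
  assert (h7 := hkz j). assert (h8 := hA j).
  revert h1 h2 h3 h4 h5 h6 h7 h8. expand_pow.
  set (J := q ^ j). set (X := q ^ n). intros.
  field. repeat split; auto; first [nz_scaled z | nz_scaled (RtoC 1)].
Qed.

Lemma V_one (j : nat) : V j 1 = lambert4 (S j).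
Proof.
  destruct Hadm as [ha hz hk hkz hA haz hq].
  unfold V, lambert4, lam, G. simpl cprod. unfold ratio.
  assert (h2 := hk j). assert (h4 := haz j). assert (h5 := hkz j). assert (h6 := hA j).
  rewrite !Nat.add_0_r, Nat.add_1_r. revert h2 h4 h5 h6. expand_pow.
  set (J := q ^ j). simpl Cpow. intros.
  field. repeat split; auto; first [nz_scaled z | nz_scaled (RtoC 1)].
Qed.

Lemma tele_row (j N : nat) :
  csum (fun i => T j (S i)) N - csum (fun i => T (S j) (S i)) N = V j 1 - V j (S N).
Proof.
  induction N as [|N IH]; simpl csum; [ring|].
  transitivity ((csum (fun i => T j (S i)) N - csum (fun i => T (S j) (S i)) N)
                + (T j (S N) - T (S j) (S N))); [ring|].
  rewrite IH, T_tele by lia. ring.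
Qed.

Lemma tele_block (M N : nat) :
  csum (fun i => T 0 (S i)) N - csum (fun i => T M (S i)) N
  = csum (fun j => lambert4 (S j)) M - csum (fun j => V j (S N)) M.
Proof.
  induction M as [|M IH]; simpl csum; [ring|].
  transitivity ((csum (fun i => T 0 (S i)) N - csum (fun i => T M (S i)) N)
                + (csum (fun i => T M (S i)) N - csum (fun i => T (S M) (S i)) N)); [ring|].
  rewrite IH, tele_row, V_one. ring.
Qed.

Lemma diagonal_identity (N : nat) :
  csum (fun i => T 0 (S i)) N - csum (fun j => lambert4 (S j)) N
  = csum (fun i => T N (S i)) N - csum (fun j => V j (S N)) N.
Proof.
  transitivity (csum (fun i => T 0 (S i)) N
    - (csum (fun i => T 0 (S i)) N - csum (fun i => T N (S i)) N)
    - csum (fun j => V j (S N)) N); [rewrite tele_block; ring | ring].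
Qed.

(* Estimates: from now on |q| < 1 and u := |a/z| |q| < 1; r := (1 + u)/2 is the
   geometric rate of the products G. *)
Hypothesis hq : (Cmod q < 1)%R.
Hypothesis hu : (Cmod (a / z) * Cmod q < 1)%R.

Let u : R := (Cmod (a / z) * Cmod q)%R.
Let r : R := ((1 + u) / 2)%R.

Lemma u_nonneg : (0 <= u)%R.
Proof. unfold u. apply Rmult_le_pos; apply Cmod_ge_0. Qed.

Lemma r_bounds : (0 < r < 1)%R.
Proof. assert (H := u_nonneg). unfold r. unfold u in *. lra. Qed.

Definition denominators_bounded (d : R) : Prop :=
  (0 < d)%R /\ (d <= 1 - Cmod q)%R /\
  (forall p, d <= Cmod (1 - k * q ^ (S p)))%R /\
  (forall p, d <= Cmod (1 - k / z * q ^ (S p)))%R /\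
  (forall p, d <= Cmod (1 - a * q ^ (S p)))%R /\
  (forall p, d <= Cmod (1 - a / z * q ^ (S p)))%R.

Lemma denominators_bounded_exists : exists d, denominators_bounded d.
Proof.
  destruct Hadm as [_ _ hk hkz hA haz _].
  destruct (factor_bounded_below k q hq hk) as (d1 & H1 & D1).
  destruct (factor_bounded_below (k / z) q hq hkz) as (d2 & H2 & D2).
  destruct (factor_bounded_below a q hq hA) as (d3 & H3 & D3).
  destruct (factor_bounded_below (a / z) q hq haz) as (d4 & H4 & D4).
  exists (Rmin (Rmin d1 d2) (Rmin (Rmin d3 d4) (1 - Cmod q))).
  generalize (Rmin_l d1 d2) (Rmin_r d1 d2) (Rmin_l d3 d4) (Rmin_r d3 d4)
    (Rmin_l (Rmin d3 d4) (1 - Cmod q)) (Rmin_r (Rmin d3 d4) (1 - Cmod q))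
    (Rmin_l (Rmin d1 d2) (Rmin (Rmin d3 d4) (1 - Cmod q)))
    (Rmin_r (Rmin d1 d2) (Rmin (Rmin d3 d4) (1 - Cmod q))).
  set (d := Rmin (Rmin d1 d2) (Rmin (Rmin d3 d4) (1 - Cmod q))). intros.
  repeat split.
  - unfold d. repeat apply Rmin_pos; lra.
  - lra.
  - intros p. specialize (D1 p). lra.
  - intros p. specialize (D2 p). lra.
  - intros p. specialize (D3 p). lra.
  - intros p. specialize (D4 p). lra.
Qed.

Lemma Cmod_geom_factor (j : nat) : Cmod (a / z * q ^ (S j)) = (u * Cmod q ^ j)%R.
Proof. unfold u. rewrite Cmod_mult, Cmod_pow. simpl. ring. Qed.

Lemma ratio_bound (d : R) : denominators_bounded d -> forall i j,
  (Cmod (ratio j i) <= Cmod q ^ j * ((1 + Cmod z) * (1 + Cmod (k / a)) * u / (d * d)))%R.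
Proof.
  intros (Hd & _ & _ & Hkz & HA & _) i j. unfold ratio.
  assert (Hq1 : (Cmod (q ^ i) <= 1)%R) by (apply Cmod_pow_le_1; lra).
  assert (Hqj : (0 <= Cmod q ^ j)%R) by (apply pow_le; apply Cmod_ge_0).
  assert (Hu := u_nonneg).
  eapply Rle_trans.
  { apply Cmod_frac_bound with
      (d := d) (X := ((1 + Cmod z) * (1 + Cmod (k / a)) * (u * Cmod q ^ j))%R);
      [exact Hd| |apply Hkz| apply HA].
    rewrite Cmod_mult, Cmod_mult, Cmod_geom_factor.
    apply Rmult_le_compat_r; [nra|].
    apply Rmult_le_compat; try apply Cmod_ge_0; apply Cmod_1m_mul_le; auto. }
  apply Req_le. field. lra.
Qed.

Lemma perturbed_rate (t : R) : t = ((1 - u) / 10)%R ->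
  ((1 + t) * (1 + t) * u / ((1 - t) * (1 - t)) <= r)%R.
Proof.
  intros Ht. assert (Hu0 := u_nonneg). unfold r. unfold u in *.
  assert (0 < t <= /10)%R by lra.
  apply (Rmult_le_reg_r ((1 - t) * (1 - t))); [nra|].
  unfold Rdiv. rewrite Rmult_assoc, Rinv_l by nra. nra.
Qed.

(* From some index on, the ratios are at most |q|^j r, since their factors
   1 - c q^m tend to 1. *)
Lemma ratio_bound_eventually : exists I0, forall i j, (I0 <= i)%nat ->
  (Cmod (ratio j i) <= Cmod q ^ j * r)%R.
Proof.
  assert (Hu := u_nonneg). assert (Hq0 := Cmod_ge_0 q).
  set (t := ((1 - u) / 10)%R). assert (Ht : (0 < t <= /10)%R) by (unfold t, u in *; lra).
  set (A := (1 + Cmod z + Cmod (k / a) + Cmod (k / z) + Cmod a)%R).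
  assert (HA : (1 <= A)%R).
  { unfold A. generalize (Cmod_ge_0 z) (Cmod_ge_0 (k / a)) (Cmod_ge_0 (k / z)) (Cmod_ge_0 a). lra. }
  destruct (pow_small (Cmod q) (t / A) ltac:(lra)) as (I0 & HI); [apply Rdiv_lt_0_compat; lra|].
  exists I0. intros i j Hi.
  assert (small : forall c m, (Cmod c <= A)%R -> (i <= m)%nat -> (Cmod c * Cmod (q ^ m) <= t)%R).
  { intros c m Hc Hm. rewrite Cmod_pow.
    assert (Cmod q ^ m <= t / A)%R.
    { eapply Rle_trans; [apply pow_le_mono; [lra| exact Hm]| apply HI; auto]. }
    replace t with (A * (t / A))%R by (field; lra).
    apply Rmult_le_compat; auto; [apply Cmod_ge_0| apply pow_le; auto]. }
  assert (Hcz : (Cmod z <= A)%R) by (unfold A; generalize (Cmod_ge_0 (k / a)) (Cmod_ge_0 (k / z)) (Cmod_ge_0 a); lra).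
  assert (Hcka : (Cmod (k / a) <= A)%R) by (unfold A; generalize (Cmod_ge_0 z) (Cmod_ge_0 (k / z)) (Cmod_ge_0 a); lra).
  assert (Hckz : (Cmod (k / z) <= A)%R) by (unfold A; generalize (Cmod_ge_0 z) (Cmod_ge_0 (k / a)) (Cmod_ge_0 a); lra).
  assert (Hca : (Cmod a <= A)%R) by (unfold A; generalize (Cmod_ge_0 z) (Cmod_ge_0 (k / a)) (Cmod_ge_0 (k / z)); lra).
  destruct (Cmod_1m_near_one z (q ^ i) t (small z i Hcz (le_n i))) as (N1 & _).
  destruct (Cmod_1m_near_one (k / a) (q ^ i) t (small _ i Hcka (le_n i))) as (N2 & _).
  destruct (Cmod_1m_near_one (k / z) (q ^ S (j + i)) t (small (k / z) (S (j + i)) Hckz ltac:(lia))) as (_ & D1).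
  destruct (Cmod_1m_near_one a (q ^ S (j + i)) t (small a (S (j + i)) Hca ltac:(lia))) as (_ & D2).
  unfold ratio. eapply Rle_trans.
  { apply Cmod_frac_bound with (d := (1 - t)%R) (X := ((1 + t) * (1 + t) * (u * Cmod q ^ j))%R);
      [lra| |exact D1| exact D2].
    rewrite Cmod_mult, Cmod_mult, Cmod_geom_factor.
    assert (0 <= Cmod q ^ j)%R by (apply pow_le; auto).
    apply Rmult_le_compat_r; [nra|].
    apply Rmult_le_compat; auto; apply Cmod_ge_0. }
  assert (Hrate := perturbed_rate t eq_refl).
  assert (0 <= Cmod q ^ j)%R by (apply pow_le; auto).
  replace ((1 + t) * (1 + t) * (u * Cmod q ^ j) / ((1 - t) * (1 - t)))%R
    with (Cmod q ^ j * ((1 + t) * (1 + t) * u / ((1 - t) * (1 - t))))%R by (field; lra).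
  apply Rmult_le_compat_l; auto.
Qed.

Lemma G_bound : exists K, (0 <= K)%R /\
  forall j m, (Cmod (G j m) <= (Cmod q ^ j) ^ m * K * r ^ m)%R.
Proof.
  destruct denominators_bounded_exists as (d & Hd).
  destruct ratio_bound_eventually as (I0 & Hev).
  assert (Hr := r_bounds).
  set (B := Rmax ((1 + Cmod z) * (1 + Cmod (k / a)) * u / (d * d)) r).
  assert (HB : (0 < r <= B)%R) by (split; [lra| apply Rmax_r]).
  exists ((B / r) ^ I0)%R. split; [apply pow_le, Rlt_le, Rdiv_lt_0_compat; lra|].
  intros j m. apply cprod_bound; auto.
  - apply pow_le, Cmod_ge_0.
  - intros i. eapply Rle_trans; [apply (ratio_bound d Hd)|].
    apply Rmult_le_compat_l; [apply pow_le, Cmod_ge_0| apply Rmax_l].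
Qed.

Lemma T_bound : exists c, forall N n, (1 <= n)%nat -> (Cmod (T N n) <= c * Cmod q ^ N)%R.
Proof.
  destruct denominators_bounded_exists as (d & Hd & Hdq & Hk & _).
  destruct G_bound as (K & HK & HG).
  assert (Hr := r_bounds). assert (Hq0 := Cmod_ge_0 q).
  exists ((1 + Cmod k) / (d * d) * K)%R. intros N n Hn. unfold T.
  assert (HqN : (0 <= Cmod q ^ N <= 1)%R) by (split; [apply pow_le| apply pow_le_1]; lra).
  assert (Hfrac : (Cmod ((1 - k * q ^ (N + n + n)) / ((1 - k * q ^ (N + n)) * (1 - q ^ n)))
                   <= (1 + Cmod k) / (d * d))%R).
  { apply Cmod_frac_bound; auto.
    - apply Cmod_1m_mul_le, Cmod_pow_le_1. lra.
    - destruct n as [|m]; [lia|]. rewrite Nat.add_succ_r. apply Hk.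
    - eapply Rle_trans; [exact Hdq| apply Cmod_1m_pow_ge; auto; lra]. }
  assert (HGN : (Cmod (G N n) <= K * Cmod q ^ N)%R).
  { eapply Rle_trans; [apply HG|].
    assert ((Cmod q ^ N) ^ n <= Cmod q ^ N)%R.
    { rewrite <- (pow_1 (Cmod q ^ N)) at 2. apply pow_le_mono; auto. }
    assert (r ^ n <= 1)%R by (apply pow_le_1; lra).
    assert (0 <= r ^ n)%R by (apply pow_le; lra).
    assert (0 <= (Cmod q ^ N) ^ n)%R by (apply pow_le; lra).
    apply Rle_trans with ((Cmod q ^ N) ^ n * K * 1)%R;
      [apply Rmult_le_compat_l; nra| nra]. }
  rewrite Cmod_mult, Rmult_assoc. apply Rmult_le_compat; auto; apply Cmod_ge_0.
Qed.

Lemma V_bound : exists c, forall j N, (Cmod (V j (S N)) <= c * r ^ N)%R.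
Proof.
  destruct denominators_bounded_exists as (d & Hd & _ & Hk & _ & _ & Haz).
  destruct G_bound as (K & HK & HG).
  assert (Hr := r_bounds). assert (Hq0 := Cmod_ge_0 q).
  exists (K * ((1 + Cmod (k * (a / z))) / (d * d)))%R. intros j N. unfold V.
  assert (HGj : (Cmod (G j (S N)) <= K * r ^ N)%R).
  { eapply Rle_trans; [apply HG|].
    assert ((Cmod q ^ j) ^ S N <= 1)%R by (apply pow_le_1; split; [apply pow_le| apply pow_le_1]; lra).
    assert (r ^ S N <= r ^ N)%R by (apply pow_le_mono; [lra| lia]).
    assert (0 <= r ^ S N)%R by (apply pow_le; lra).
    assert (0 <= (Cmod q ^ j) ^ S N)%R by (apply pow_le; apply pow_le; lra).
    apply Rle_trans with (1 * K * r ^ S N)%R;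
      [apply Rmult_le_compat_r; nra| nra]. }
  assert (Hfrac : (Cmod ((1 - k * (a / z) * q ^ S (j + j + S N))
                        / ((1 - a / z * q ^ S j) * (1 - k * q ^ (j + S N))))
                   <= (1 + Cmod (k * (a / z))) / (d * d))%R).
  { apply Cmod_frac_bound; auto.
    - apply Cmod_1m_mul_le, Cmod_pow_le_1. lra.
    - rewrite Nat.add_succ_r. apply Hk. }
  rewrite Cmod_mult.
  replace (K * ((1 + Cmod (k * (a / z))) / (d * d)) * r ^ N)%R
    with ((K * r ^ N) * ((1 + Cmod (k * (a / z))) / (d * d)))%R by ring.
  apply Rmult_le_compat; auto; apply Cmod_ge_0.
Qed.

Lemma csum_lambert4 (N : nat) :
  csum (fun j => lambert4 (S j)) N
  = csum (fun i => lam k q (S i)) N + csum (fun i => lam (a / z) q (S i)) N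
    - csum (fun i => lam a q (S i)) N - csum (fun i => lam (k / z) q (S i)) N.
Proof. induction N as [|N IH]; simpl csum; [ring|]. rewrite IH. unfold lambert4. ring. Qed.

Theorem lambert_expansion : exists L1 L2 L3 L4,
  cv (csum (fun i => lam k q (S i))) L1 /\ cv (csum (fun i => lam (a / z) q (S i))) L2 /\
  cv (csum (fun i => lam a q (S i))) L3 /\ cv (csum (fun i => lam (k / z) q (S i))) L4 /\
  cv (csum (fun i => T 0 (S i))) (L1 + L2 - L3 - L4).
Proof.
  destruct denominators_bounded_exists as (d & Hd & _ & Hk & Hkz & HA & Haz).
  destruct (lam_cv k q d hq Hd Hk) as (L1 & C1).
  destruct (lam_cv (a / z) q d hq Hd Haz) as (L2 & C2).
  destruct (lam_cv a q d hq Hd HA) as (L3 & C3).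
  destruct (lam_cv (k / z) q d hq Hd Hkz) as (L4 & C4).
  destruct T_bound as (c1 & HT). destruct V_bound as (c2 & HV).
  assert (Hr := r_bounds). assert (Hq0 := Cmod_ge_0 q).
  exists L1, L2, L3, L4. repeat split; auto.
  apply (cv_err _ (csum (fun j => lambert4 (S j)))
           (fun N => INR N * c1 * Cmod q ^ N + INR N * c2 * r ^ N)%R).
  - intros eps Heps.
    assert (Hlin := cv_plus _ _ _ _ (cv_plus _ _ _ _ (cv_plus _ _ _ _ C1 C2) (cv_opp _ _ C3))
                     (cv_opp _ _ C4)).
    destruct (Hlin eps Heps) as (N0 & HN0). exists N0. intros N HN.
    rewrite csum_lambert4. apply HN0; auto.
  - intros N. rewrite diagonal_identity.
    eapply Rle_trans; [apply Cmod_minus_le|]. apply Rplus_le_compat.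
    + rewrite Rmult_assoc. apply csum_bound. intros i _. apply HT. lia.
    + rewrite Rmult_assoc. apply csum_bound. intros j _. apply HV.
  - assert (T1 := is_lim_seq_scal_l _ c1 0%R (n_geom (Cmod q) ltac:(lra))).
    assert (T2 := is_lim_seq_scal_l _ c2 0%R (n_geom r ltac:(lra))).
    simpl in T1, T2. rewrite Rmult_0_r in T1, T2.
    assert (T12 := is_lim_seq_plus' _ _ 0%R 0%R T1 T2). rewrite Rplus_0_r in T12.
    eapply is_lim_seq_ext; [|exact T12]. intros N. simpl. ring.
Qed.

End ShiftedTerms.

Fixpoint cpoch (x q : C) (n : nat) : C :=
  match n with O => 1 | S m => cpoch x q m * (1 - x * q ^ m) end.

Lemma cpoch_nz (x q : C) (n : nat) : (forall i, 1 - x * q ^ i <> 0) -> cpoch x q n <> 0.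
Proof.
  intros H. induction n as [|n IH]; simpl.
  - intro E. injection E. lra.
  - apply Cmult_neq_0; auto.
Qed.

Lemma cpoch_well_poised (s q : C) (n : nat) :
  cpoch (q * s) q n * cpoch (- (q * s)) q n * (1 - s * s)
  = (1 - s * s * (q ^ n * q ^ n)) * cpoch s q n * cpoch (- s) q n.
Proof.
  induction n as [|n IH]; simpl; [ring|].
  transitivity ((cpoch (q * s) q n * cpoch (- (q * s)) q n * (1 - s * s))
    * ((1 - q * s * q ^ n) * (1 - - (q * s) * q ^ n))); [ring|].
  rewrite IH. ring.
Qed.

Lemma cpoch_shift (x q : C) (n : nat) :
  cpoch x q n * (1 - x * q ^ n) = (1 - x) * cpoch (q * x) q n.
Proof.
  induction n as [|n IH]; simpl; [ring|].
  transitivity ((cpoch x q n * (1 - x * q ^ n)) * (1 - x * (q * q ^ n))); [ring|].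
  rewrite IH. ring.
Qed.

Lemma G0_cpoch (a k z q : C) (n : nat) : admissible a k z q ->
  G a k z q 0 n * cpoch (q * k / z) q n * cpoch (q * a) q n
  = cpoch z q n * cpoch (k / a) q n * (q * a / z) ^ n.
Proof.
  intros [ha hz _ hkz hA _ _].
  unfold G. induction n as [|n IH]; [simpl; ring|].
  simpl cprod. simpl cpoch.
  assert (h1 := hkz n). assert (h2 := hA n).
  transitivity ((cprod (ratio a k z q 0) n * cpoch (q * k / z) q n * cpoch (q * a) q n)
    * ratio a k z q 0 n * ((1 - q * k / z * q ^ n) * (1 - q * a * q ^ n))); [ring|].
  rewrite IH. unfold ratio. simpl Nat.add. revert h1 h2. expand_pow. simpl Cpow. set (X := q ^ n). intros.
  field. repeat split; auto; first [nz_scaled z | nz_scaled (RtoC 1)].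
Qed.

Lemma f_term_eq_T (a k z q s : C) (n : nat) : admissible a k z q -> s * s = k ->
  (forall i, 1 - s * q ^ i <> 0) -> (forall i, 1 - - s * q ^ i <> 0) -> (1 <= n)%nat ->
  cpoch (q * s) q n * cpoch (- (q * s)) q n * cpoch k q n * cpoch z q n * cpoch (k / a) q n
  / (cpoch s q n * cpoch (- s) q n * cpoch (q * k) q n * cpoch (q * k / z) q n
     * cpoch (q * a) q n * (1 - q ^ n)) * (q * a / z) ^ n
  = T a k z q 0 n.
Proof.
  intros Hadm Hs hs hms Hn. pose proof Hadm as [ha hz hk hkz hA haz hq].
  assert (n1 := cpoch_nz s q n hs). assert (n2 := cpoch_nz (- s) q n hms).
  assert (n3 : cpoch (q * k) q n <> 0).
  { apply cpoch_nz. intros i. replace (1 - q * k * q ^ i) with (1 - k * q ^ (S i))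
      by (rewrite Cpow_S; ring). apply hk. }
  assert (n4 : cpoch (q * k / z) q n <> 0).
  { apply cpoch_nz. intros i. replace (1 - q * k / z * q ^ i) with (1 - k / z * q ^ (S i))
      by (rewrite Cpow_S; field; auto). apply hkz. }
  assert (n5 : cpoch (q * a) q n <> 0).
  { apply cpoch_nz. intros i. replace (1 - q * a * q ^ i) with (1 - a * q ^ (S i))
      by (rewrite Cpow_S; ring). apply hA. }
  assert (n6 : 1 - q ^ n <> 0) by (destruct n; [lia| apply hq]).
  assert (n7 : 1 - k * q ^ n <> 0) by (destruct n; [lia| apply hk]).
  assert (n8 : 1 - k <> 0).
  { rewrite <- Hs. replace (1 - s * s) with ((1 - s * q ^ 0) * (1 - - s * q ^ 0)) by (simpl; ring).
    apply Cmult_neq_0; auto. }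
  assert (E1 := cpoch_well_poised s q n). assert (E2 := cpoch_shift k q n).
  assert (E3 := G0_cpoch a k z q n Hadm).
  rewrite Hs in E1. unfold T. simpl Nat.add.
  replace (q ^ (n + n)) with (q ^ n * q ^ n) by (rewrite Cpow_add_r; ring).
  set (P1 := cpoch (q * s) q n) in *. set (P2 := cpoch (- (q * s)) q n) in *.
  set (Pk := cpoch k q n) in *. set (Pz := cpoch z q n) in *.
  set (Pka := cpoch (k / a) q n) in *. set (Ps := cpoch s q n) in *.
  set (Pms := cpoch (- s) q n) in *. set (Pqk := cpoch (q * k) q n) in *.
  set (Pqkz := cpoch (q * k / z) q n) in *. set (Pqa := cpoch (q * a) q n) in *.
  set (G0 := G a k z q 0 n) in *. set (X := q ^ n) in *. set (Y := (q * a / z) ^ n) in *.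
  transitivity ((P1 * P2 * (1 - k)) * (Pk * (1 - k * X)) * (Pz * Pka * Y) /
     ((1 - k) * (1 - k * X) * Ps * Pms * Pqk * Pqkz * Pqa * (1 - X))).
  { field. repeat split; auto. }
  rewrite E1, E2, <- E3. field. repeat split; auto.
Qed.

(* Defs is imported last: its names Cinv, Cdiv, Cpow, Copp would otherwise shadow
   Coquelicot's in the development above. *)
From Pilot Require Import Defs.
Open Scope C_scope.

Definition toC (x : Cplx) : C := (Re x, Im x).
Definition ofC (c : C) : Cplx := mkC (fst c) (snd c).

Lemma toC_ofC (c : C) : toC (ofC c) = c.
Proof. destruct c. reflexivity. Qed.

Lemma toC_inj (x y : Cplx) : toC x = toC y -> x = y.
Proof. destruct x, y. unfold toC. simpl. intros E. injection E. intros; subst; reflexivity. Qed.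

Lemma toC_add (x y : Cplx) : toC (Cadd x y) = toC x + toC y.
Proof. reflexivity. Qed.
Lemma toC_mul (x y : Cplx) : toC (Cmul x y) = toC x * toC y.
Proof. reflexivity. Qed.
Lemma toC_opp (x : Cplx) : toC (Defs.Copp x) = - toC x.
Proof. reflexivity. Qed.
Lemma toC_sub (x y : Cplx) : toC (Csub x y) = toC x - toC y.
Proof. reflexivity. Qed.
Lemma toC_one : toC Cone = 1.
Proof. reflexivity. Qed.
Lemma toC_zero : toC Czero = 0.
Proof. reflexivity. Qed.
Lemma toC_inv (x : Cplx) : toC (Defs.Cinv x) = Complex.Cinv (toC x).
Proof.
  unfold toC, Defs.Cinv, Complex.Cinv. simpl.
  replace (Re x * (Re x * 1) + Im x * (Im x * 1))%R with (Re x * Re x + Im x * Im x)%R by ring.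
  reflexivity.
Qed.
Lemma toC_div (x y : Cplx) : toC (Defs.Cdiv x y) = toC x / toC y.
Proof. unfold Defs.Cdiv, Complex.Cdiv. rewrite toC_mul, toC_inv. reflexivity. Qed.
Lemma toC_pow (x : Cplx) (n : nat) : toC (Defs.Cpow x n) = toC x ^ n.
Proof. induction n as [|n IH]; simpl; [reflexivity|]. rewrite toC_mul, IH. reflexivity. Qed.
Lemma toC_poch (x q : Cplx) (n : nat) : toC (Cpoch x q n) = cpoch (toC x) (toC q) n.
Proof.
  induction n as [|n IH]; simpl; [reflexivity|].
  rewrite toC_mul, IH, toC_sub, toC_one, toC_mul, toC_pow. reflexivity.
Qed.
Lemma toC_norm (x : Cplx) : Cnorm x = Cmod (toC x).
Proof. unfold Cnorm, Cmod, toC. simpl. f_equal. ring. Qed.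

Global Hint Rewrite toC_add toC_mul toC_opp toC_sub toC_one toC_zero toC_div toC_pow toC_poch
  : toC.

Lemma toC_nz (x : Cplx) : x <> Czero -> toC x <> 0.
Proof. intros H E. apply H, toC_inj. rewrite E. reflexivity. Qed.

Lemma toC_partial (F : nat -> Cplx) (N : nat) :
  toC (Cpartial F N) = csum (fun i => toC (F (S i))) N.
Proof. induction N as [|N IH]; simpl; [reflexivity|]. rewrite toC_add, IH. reflexivity. Qed.

Lemma Csum1_of_cv (F : nat -> Cplx) (g : nat -> C) (l : Cplx) :
  (forall i, toC (F (S i)) = g i) -> cv (csum g) (toC l) -> Csum1 F l.
Proof.
  intros HF Hg eps He. destruct (Hg eps He) as (N & HN). exists N. intros n Hn.
  rewrite toC_norm, toC_sub, toC_partial.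
  replace (csum (fun i => toC (F (S i))) n) with (csum g n); [apply HN; auto|].
  clear Hn HN. induction n as [|n IH]; simpl; [reflexivity|]. rewrite IH, HF. reflexivity.
Qed.

Lemma lam_term_toC (x q : Cplx) (n : nat) : toC (lam_term x q n) = lam (toC x) (toC q) n.
Proof. unfold lam_term, lam. autorewrite with toC. reflexivity. Qed.

Lemma admissible_of_hyps (a k z q s : Cplx) :
  (Cmod (toC q) < 1)%R -> (Cmod (toC q * toC a) < Cmod (toC z))%R -> a <> Czero ->
  (forall n : nat,
     Csub Cone (Cmul s (Defs.Cpow q n)) <> Czero /\
     Csub Cone (Cmul (Defs.Copp s) (Defs.Cpow q n)) <> Czero /\
     Csub Cone (Cmul k (Defs.Cpow q (S n))) <> Czero /\
     Csub Cone (Cmul (Defs.Cdiv k z) (Defs.Cpow q (S n))) <> Czero /\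
     Csub Cone (Cmul a (Defs.Cpow q (S n))) <> Czero /\
     Csub Cone (Cmul (Defs.Cdiv a z) (Defs.Cpow q (S n))) <> Czero) ->
  admissible (toC a) (toC k) (toC z) (toC q).
Proof.
  intros hq hqaz ha hden.
  assert (hz : toC z <> 0).
  { intro E. rewrite E, Cmod_0 in hqaz. generalize (Cmod_ge_0 (toC q * toC a)). lra. }
  constructor; auto using toC_nz;
    intros p; destruct (hden p) as (_ & _ & h3 & h4 & h5 & h6);
    [ apply toC_nz in h3 | apply toC_nz in h4 | apply toC_nz in h5 | apply toC_nz in h6 | ];
    autorewrite with toC in *; auto.
  (* 1 - q^(p+1) <> 0 because |q^(p+1)| < 1 *)
  intros E. assert (Hmod := Cmod_1m_pow_ge (toC q) (S p) ltac:(lra) ltac:(lia)).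
  rewrite E, Cmod_0 in Hmod. generalize (Cmod_ge_0 (toC q)). lra.
Qed.

Lemma rate_of_hyp (a z q : C) :
  z <> 0 -> (Cmod (q * a) < Cmod z)%R -> (Cmod (a / z) * Cmod q < 1)%R.
Proof.
  intros hz H. assert (Hz : (0 < Cmod z)%R) by (apply Cmod_gt_0; auto).
  rewrite Cmod_div, Cmod_mult in * by auto.
  apply (Rmult_lt_reg_r (Cmod z)); auto.
  replace (Cmod a / Cmod z * Cmod q * Cmod z)%R with (Cmod q * Cmod a)%R by (field; lra). lra.
Qed.

Lemma f_term_toC (a k z q s : Cplx) (n : nat) :
  admissible (toC a) (toC k) (toC z) (toC q) -> Cmul s s = k ->
  (forall i, Csub Cone (Cmul s (Defs.Cpow q i)) <> Czero) ->
  (forall i, Csub Cone (Cmul (Defs.Copp s) (Defs.Cpow q i)) <> Czero) -> (1 <= n)%nat ->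
  toC (f_term a k z q s n) = T (toC a) (toC k) (toC z) (toC q) 0 n.
Proof.
  intros Hadm hs h1 h2 Hn. unfold f_term. autorewrite with toC.
  apply f_term_eq_T; auto.
  - rewrite <- hs. autorewrite with toC. reflexivity.
  - intros i. specialize (h1 i). apply toC_nz in h1. autorewrite with toC in h1. exact h1.
  - intros i. specialize (h2 i). apply toC_nz in h2. autorewrite with toC in h2. exact h2.
Qed.

Open Scope R_scope.

Theorem lemma2p3 (a k z q s : Cplx)
  (hs : Cmul s s = k)
  (hq : Cnorm q < 1)
  (hqaz : Cnorm (Cmul q a) < Cnorm z)
  (ha : a <> Czero)
  (hden : forall n : nat,
     Csub Cone (Cmul s (Cpow q n)) <> Czero /\
     Csub Cone (Cmul (Copp s) (Cpow q n)) <> Czero /\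
     Csub Cone (Cmul k (Cpow q (S n))) <> Czero /\
     Csub Cone (Cmul (Cdiv k z) (Cpow q (S n))) <> Czero /\
     Csub Cone (Cmul a (Cpow q (S n))) <> Czero /\
     Csub Cone (Cmul (Cdiv a z) (Cpow q (S n))) <> Czero) :
  exists L1 L2 L3 L4 : Cplx,
    Csum1 (lam_term k q) L1 /\
    Csum1 (lam_term (Cdiv a z) q) L2 /\
    Csum1 (lam_term a q) L3 /\
    Csum1 (lam_term (Cdiv k z) q) L4 /\
    Csum1 (f_term a k z q s) (Csub (Csub (Cadd L1 L2) L3) L4).
Proof.
  rewrite toC_norm in hq. rewrite !toC_norm, toC_mul in hqaz.
  pose proof (admissible_of_hyps a k z q s hq hqaz ha hden) as Hadm.
  pose proof (rate_of_hyp _ _ _ (adm_z _ _ _ _ Hadm) hqaz) as hu.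
  destruct (lambert_expansion _ _ _ _ Hadm hq hu) as (L1 & L2 & L3 & L4 & C1 & C2 & C3 & C4 & C5).
  exists (ofC L1), (ofC L2), (ofC L3), (ofC L4).
  repeat split; (eapply Csum1_of_cv; [intros i| rewrite ?toC_sub, ?toC_add, !toC_ofC; eauto]).
  - apply lam_term_toC.
  - rewrite lam_term_toC, toC_div. reflexivity.
  - apply lam_term_toC.
  - rewrite lam_term_toC, toC_div. reflexivity.
  - apply f_term_toC; auto; [intros j; apply (hden j)| intros j; apply (hden j)| lia].
Qed.
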